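(* Let $F:\mathbb{R}^n\rightrightarrows\mathbb{R}^n$ be a set-valued mapping with closed graph, and let $(\bar x,0)\in\mathrm{gph}\, F$. Assume that $F$ is semismooth$^*$ at $(\bar x,0)$ and that there are positive reals $\bar\delta$ and $\kappa$ such that for every $(x,y)\in\mathrm{gph}\, F$ with $\|(x,y)-(\bar x,0)\|\le\bar\delta$ there exists a pair of matrices $(A,B)\in\mathcal{A}_{\rm reg}F(x,y)$ with \[\|A^{-1}\|\,\|(A\,\vdots\,B)\|_F\le\kappa.\] Then $\bar x$ is an isolated solution of the inclusion $0\in F(x)$.
   Context: For a closed set $C\subset\mathbb{R}^p$ and $\bar z\in C$, the tangent cone is $T_C(\bar z)=\{w:\exists t_k\downarrow 0,\ w_k\to w \text{ with } \bar z+t_kw_k\in C\}$, and the regular normal cone is $\widehat N_C(\bar z)=\{z^*:\langle z^*,w\rangle\le 0\ \forall w\in T_C(\bar z)\}$. For a direction $w\in\mathbb{R}^p$, the directional limiting normal cone $N_C(\bar z;w)$ is the set of all $z^*$ for which there exist $t_k\downarrow 0$, $w_k\to w$ and $z_k^*\to z^*$ with $\bar z+t_kw_k\in C$ and $z_k^*\in\widehat N_C(\bar z+t_kw_k)$. The limiting normal cone is $N_C(\bar z)=N_C(\bar z;0)$. For $F:\mathbb{R}^n\rightrightarrows\mathbb{R}^m$ and $(\bar x,\bar y)\in\mathrm{gph}\, F$, the limiting coderivative is $D^*F(\bar x,\bar y)(v^* )=\{u^*:(u^*,-v^* )\in N_{\mathrm{gph}\, F}(\bar x,\bar y)\}$ and,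 for $(u,v)\in\mathbb{R}^n\times\mathbb{R}^m$, the directional limiting coderivative is $D^*F((\bar x,\bar y);(u,v))(v^* )=\{u^*:(u^*,-v^* )\in N_{\mathrm{gph}\, F}((\bar x,\bar y);(u,v))\}$. Graphs of coderivatives are written as $\mathrm{gph}\, D^*F(\bar x,\bar y)=\{(v^*,u^* ):u^*\in D^*F(\bar x,\bar y)(v^* )\}$ (and analogously for the directional one). $F$ is called semismooth$^*$ at $(\bar x,\bar y)\in\mathrm{gph}\, F$ if for all $(u,v)\in\mathbb{R}^n\times\mathbb{R}^m$ one has $\langle u^*,u\rangle=\langle v^*,v\rangle$ for all $(v^*,u^* )\in\mathrm{gph}\, D^*F((\bar x,\bar y);(u,v))$. For $F:\mathbb{R}^n\rightrightarrows\mathbb{R}^n$ and $(x,y)\in\mathrm{gph}\, F$, $\mathcal{A}F(x,y)$ denotes the set of all pairs $(A,B)$ of $n\times n$ matrices such that there exist $n$ elements $(y_i^*,x_i^* )\in\mathrm{gph}\, D^*F(x,y)$, $i=1,\dots,n$, with the $i$-th row of $A$ equal to $(x_i^* )^T$ and the $i$-th row of $B$ equal to $(y_i^* )^T$; and $\mathcal{A}_{\rm reg}F(x,y)=\{(A,B)\in\mathcal{A}F(x,y): A \text{ nonsingular}\}$. $\|(A\,\vdots\,B)\|_F$ is the Frobenius norm of the $n\times 2n$ matrix obtained by placing $A$ and $B$ side by side; $\|A^{-1}\|$ is the spectral norm. An isolated solution means there is a neighborhood of $\bar x$ containing no other solution. *)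

From HB Require Import structures.
From mathcomp Require Import all_boot all_order all_algebra.
From mathcomp Require Import all_classical all_reals all_analysis.
Set Implicit Arguments. Unset Strict Implicit. Unset Printing Implicit Defensive.
Import Order.TTheory GRing.Theory Num.Theory.
Import numFieldNormedType.Exports.
Local Open Scope classical_set_scope.
Local Open Scope ring_scope.

Section Defs.
Variable R : realType.

Definition dotv (p : nat) (a b : 'cV[R]_p) : R := \sum_(i < p) a i 0 * b i 0.
Definition norm2 (p : nat) (a : 'cV[R]_p) : R := Num.sqrt (dotv a a).

Definition frob (m k : nat) (M : 'M[R]_(m, k)) : R :=
  Num.sqrt (\sum_(i < m) \sum_(j < k) M i j ^+ 2).

Definition specnorm (m k : nat) (M : 'M[R]_(m, k)) : R :=
  sup [set norm2 (M *m v) | v in [set v : 'cV[R]_k | norm2 v <= 1]].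

Definition tangent_cone (p : nat) (C : set 'cV[R]_p) (zb : 'cV[R]_p) : set 'cV[R]_p :=
  [set w | exists (t : nat -> R) (ws : nat -> 'cV[R]_p),
     (forall k, 0 < t k) /\ t @ \oo --> (0 : R) /\ ws @ \oo --> w /\
     (forall k, C (zb + t k *: ws k))].

Definition reg_normal_cone (p : nat) (C : set 'cV[R]_p) (zb : 'cV[R]_p) : set 'cV[R]_p :=
  [set zs | forall w, tangent_cone C zb w -> dotv zs w <= 0].

Definition dir_normal_cone (p : nat) (C : set 'cV[R]_p) (zb w : 'cV[R]_p) : set 'cV[R]_p :=
  [set zs | exists (t : nat -> R) (ws zss : nat -> 'cV[R]_p),
     (forall k, 0 < t k) /\ t @ \oo --> (0 : R) /\ ws @ \oo --> w /\
     zss @ \oo --> zs /\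
     (forall k, C (zb + t k *: ws k)) /\
     (forall k, reg_normal_cone C (zb + t k *: ws k) (zss k))].

Definition lim_normal_cone (p : nat) (C : set 'cV[R]_p) (zb : 'cV[R]_p) : set 'cV[R]_p :=
  dir_normal_cone C zb 0.

Definition gph (n m : nat) (F : 'cV[R]_n -> set 'cV[R]_m) : set 'cV[R]_(n + m) :=
  [set z | exists x y, F x y /\ z = col_mx x y].

Definition coderiv (n m : nat) (F : 'cV[R]_n -> set 'cV[R]_m)
  (x : 'cV[R]_n) (y : 'cV[R]_m) (vs : 'cV[R]_m) : set 'cV[R]_n :=
  [set us | lim_normal_cone (gph F) (col_mx x y) (col_mx us (- vs))].

Definition dir_coderiv (n m : nat) (F : 'cV[R]_n -> set 'cV[R]_m)
  (x : 'cV[R]_n) (y : 'cV[R]_m) (u : 'cV[R]_n) (v : 'cV[R]_m) (vs : 'cV[R]_m)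
  : set 'cV[R]_n :=
  [set us | dir_normal_cone (gph F) (col_mx x y) (col_mx u v) (col_mx us (- vs))].

Definition semismooth_star (n m : nat) (F : 'cV[R]_n -> set 'cV[R]_m)
  (xb : 'cV[R]_n) (yb : 'cV[R]_m) : Prop :=
  forall (u : 'cV[R]_n) (v : 'cV[R]_m) (vs : 'cV[R]_m) (us : 'cV[R]_n),
    dir_coderiv F xb yb u v vs us -> dotv us u = dotv vs v.

(* \mathcal{A}F(x,y): the i-th rows of A and B are (x_i^* )^T and (y_i^* )^T
   for some (y_i^*, x_i^* ) in gph D*F(x,y) *)
Definition AF (n : nat) (F : 'cV[R]_n -> set 'cV[R]_n) (x y : 'cV[R]_n)
  : set ('M[R]_n * 'M[R]_n) :=
  [set AB | forall i : 'I_n,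
     coderiv F x y (row i AB.2)^T (row i AB.1)^T].

Definition AregF (n : nat) (F : 'cV[R]_n -> set 'cV[R]_n) (x y : 'cV[R]_n)
  : set ('M[R]_n * 'M[R]_n) :=
  [set AB | AF F x y AB /\ AB.1 \in unitmx].

End Defs.

(* Suppose solutions x_k -> xb, x_k <> xb, of 0 \in F(x) exist, and let u_k be
   the unit directions of x_k - xb.  For (A_k, B_k) in A_reg F(x_k, 0), the
   rows of [A_k, -B_k] are limiting normals to gph F at (x_k, 0), and the bound
   on ||A_k^-1|| ||(A_k : B_k)||_F gives |A_k u_k| >= ||(A_k : B_k)||_F / kappa.
   After scaling by ||(A_k : B_k)||_F, a subsequence of ([A_k, -B_k], (u_k, 0))
   converges to some (C, w).  The rows of C are directional limiting normals
   to gph F at (xb, 0) in direction w, so semismoothness* forces C w = 0,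
   whereas |C w| >= 1 / kappa by continuity. *)
From HB Require Import structures.
From mathcomp Require Import all_boot all_order all_algebra.
From mathcomp Require Import all_classical all_reals all_analysis.
From mathcomp Require Import lra.
Import Order.TTheory GRing.Theory Num.Theory.
Import numFieldNormedType.Exports.
Local Open Scope classical_set_scope.
Local Open Scope ring_scope.
Set Implicit Arguments. Unset Strict Implicit.

Section SemismoothIsolation.
Variable R : realType.

Lemma dotv_ge0 p (a : 'cV[R]_p) : 0 <= dotv a a.
Proof. by apply: sumr_ge0 => i _; rewrite -expr2 sqr_ge0. Qed.

Lemma norm2_ge0 p (a : 'cV[R]_p) : 0 <= norm2 a.
Proof. exact: sqrtr_ge0. Qed.

Lemma dotvC p (a b : 'cV[R]_p) : dotv a b = dotv b a.
Proof. by apply: eq_bigr => i _; rewrite mulrC. Qed.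

Lemma dotvZl p (c : R) (a b : 'cV[R]_p) : dotv (c *: a) b = c * dotv a b.
Proof. by rewrite /dotv mulr_sumr; apply: eq_bigr => i _; rewrite mxE mulrA. Qed.

Lemma dotv_col_mx p q (a c : 'cV[R]_p) (b d : 'cV[R]_q) :
  dotv (col_mx a b) (col_mx c d) = dotv a c + dotv b d.
Proof.
by rewrite /dotv big_split_ord; congr (_ + _); apply: eq_bigr => i _;
  rewrite ?col_mxEu ?col_mxEd.
Qed.

Lemma dotv_row_tr m p (M : 'M[R]_(m, p)) (v : 'cV[R]_p) i :
  dotv (row i M)^T v = (M *m v) i 0.
Proof. by rewrite mxE; apply: eq_bigr => j _; rewrite !mxE. Qed.

Lemma norm2Z p (c : R) (a : 'cV[R]_p) : norm2 (c *: a) = `|c| * norm2 a.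
Proof.
by rewrite /norm2 dotvZl dotvC dotvZl mulrA -expr2 sqrtrM ?sqr_ge0 // sqrtr_sqr.
Qed.

Lemma norm2_eq0 p (a : 'cV[R]_p) : norm2 a = 0 -> a = 0.
Proof.
move=> /eqP; rewrite sqrtr_eq0 => aa_le0.
have aa0 : dotv a a = 0 by apply/eqP; rewrite eq_le aa_le0 dotv_ge0.
apply/matrixP => i j; rewrite (ord1 j) mxE; apply/eqP; rewrite -sqrf_eq0 expr2.
by apply/eqP/(psumr_eq0P _ aa0) => // k _; rewrite -expr2 sqr_ge0.
Qed.

Lemma norm2_0 p : norm2 (0 : 'cV[R]_p) = 0.
Proof. by rewrite /norm2 /dotv big1 ?sqrtr0 // => i _; rewrite mxE mul0r. Qed.

Lemma norm2_gt0 p (a : 'cV[R]_p) : (0 < norm2 a) = (a != 0).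
Proof.
rewrite lt_neqAle norm2_ge0 andbT eq_sym.
apply/idP/idP => [|a_neq0]; first by apply: contraNneq => ->; rewrite norm2_0.
by apply/eqP => /norm2_eq0 a0; rewrite a0 eqxx in a_neq0.
Qed.

Lemma norm2_col_mx0 p q (a : 'cV[R]_p) : norm2 (col_mx a (0 : 'cV[R]_q)) = norm2 a.
Proof.
by rewrite /norm2 dotv_col_mx [dotv 0 0]big1 ?addr0 // => i _; rewrite mxE mul0r.
Qed.

Lemma normr_entry_le_norm2 p (a : 'cV[R]_p) i : `|a i 0| <= norm2 a.
Proof.
rewrite -sqrtr_sqr ler_sqrt ?dotv_ge0 // /dotv (bigD1 i) //= expr2 lerDl.
by apply: sumr_ge0 => k _; rewrite -expr2 sqr_ge0.
Qed.

Lemma sum_sqr_le_sqr_sum (I : Type) (r : seq I) (g : I -> R) :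
  (forall i, 0 <= g i) -> \sum_(i <- r) g i ^+ 2 <= (\sum_(i <- r) g i) ^+ 2.
Proof.
move=> g_ge0; elim: r => [|a r IH]; first by rewrite !big_nil expr0n.
have S_ge0 : 0 <= \sum_(i <- r) g i by apply: sumr_ge0.
move: IH S_ge0 (g_ge0 a); rewrite !big_cons.
set S := \sum_(i <- r) g i; set Q := \sum_(i <- r) g i ^+ 2; nra.
Qed.

Lemma norm2_le_sum p (a : 'cV[R]_p) : norm2 a <= \sum_i `|a i 0|.
Proof.
have sum_ge0 : 0 <= \sum_i `|a i 0| by apply: sumr_ge0.
rewrite -(ger0_norm sum_ge0) -sqrtr_sqr ler_sqrt ?sqr_ge0 //.
have -> : dotv a a = \sum_i `|a i 0| ^+ 2.
  by apply: eq_bigr => i _; rewrite real_normK ?num_real // expr2.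
exact: sum_sqr_le_sqr_sum.
Qed.

Lemma normr_entry_le_frob m k (M : 'M[R]_(m, k)) i j : `|M i j| <= frob M.
Proof.
rewrite -sqrtr_sqr ler_sqrt; last by do 2 (apply: sumr_ge0 => ? _); exact: sqr_ge0.
rewrite (bigD1 i) //= (bigD1 j) //= -addrA lerDl.
apply: addr_ge0; first by apply: sumr_ge0 => ? _; exact: sqr_ge0.
by apply: sumr_ge0 => ? _; apply: sumr_ge0 => ? _; exact: sqr_ge0.
Qed.

Lemma frob_eq0 m k (M : 'M[R]_(m, k)) : frob M = 0 -> M = 0.
Proof.
move=> M0; apply/matrixP => i j; apply/eqP.
by rewrite mxE -normr_le0 -M0 normr_entry_le_frob.
Qed.

Lemma norm2_mulmx_le_sum m k (M : 'M[R]_(m, k)) (v : 'cV[R]_k) :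
  norm2 v <= 1 -> norm2 (M *m v) <= \sum_i \sum_j `|M i j|.
Proof.
move=> v_le1; apply: le_trans (norm2_le_sum _) _; apply: ler_sum => i _.
rewrite mxE; apply: le_trans (ler_norm_sum _ _ _) _; apply: ler_sum => j _.
by rewrite normrM ler_piMr // (le_trans (normr_entry_le_norm2 _ _)).
Qed.

Lemma specnorm_ub m k (M : 'M[R]_(m, k)) (v : 'cV[R]_k) :
  norm2 v <= 1 -> norm2 (M *m v) <= specnorm M.
Proof.
move=> v_le1; apply: ub_le_sup; last by exists v.
by exists (\sum_i \sum_j `|M i j|) => _ [w w_le1 <-]; exact: norm2_mulmx_le_sum.
Qed.

Lemma norm2_mulmx_le m k (M : 'M[R]_(m, k)) (v : 'cV[R]_k) :
  norm2 (M *m v) <= specnorm M * norm2 v.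
Proof.
have [->|v_neq0] := eqVneq v 0; first by rewrite mulmx0 !norm2_0 mulr0.
have v_gt0 : 0 < norm2 v by rewrite norm2_gt0.
have unit_v : norm2 ((norm2 v)^-1 *: v) <= 1.
  by rewrite norm2Z ger0_norm ?invr_ge0 ?norm2_ge0 // mulVf // gt_eqF.
have := specnorm_ub M unit_v.
by rewrite -scalemxAr norm2Z ger0_norm ?invr_ge0 ?norm2_ge0 // ler_pdivrMl // mulrC.
Qed.

Lemma natSinv_gt0 m : 0 < m.+1%:R^-1 :> R.
Proof. by rewrite invr_gt0. Qed.

Lemma ball_natSinv_cvg (M : pseudoMetricType R) (a : nat -> M) (l : M) :
  (forall m, ball l m.+1%:R^-1 (a m)) -> a @ \oo --> l.
Proof.
move=> a_near; apply/cvg_ballP => e e0.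
apply: filterS (near_infty_natSinv_lt (PosNum e0)) => m lt_me.
by apply: le_ball (a_near m); exact: ltW.
Qed.

Lemma ball_natSinv_cvg_shift (M : pseudoMetricType R) (a b : nat -> M) (l : M) :
  a @ \oo --> l -> (forall m, ball (a m) m.+1%:R^-1 (b m)) -> b @ \oo --> l.
Proof.
move=> /cvg_ballP a_cvg b_near; apply/cvg_ballP => e e0.
have e2 : 0 < e / 2 by rewrite divr_gt0.
apply: filterS2 (a_cvg _ e2) (near_infty_natSinv_lt (PosNum e2)) => m la lt_me.
rewrite (splitr e); apply: ball_triangle la (le_ball _ (b_near m)); exact: ltW.
Qed.

Lemma compact_subseq_cvg (M : pseudoMetricType R) (K : set M) (s : nat -> M) :
  compact K -> (forall k, K (s k)) ->
  exists (p : M) (phi : nat -> nat),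
    (forall m, m <= phi m)%N /\ (s \o phi) @ \oo --> p.
Proof.
move=> cK sK.
have [p [_ p_cluster]] : (K `&` cluster (s @ \oo)) !=set0.
  by apply: cK; exact: (@filterE _ \oo _ (fun k => K (s k)) sK).
have near_p m : exists k, (m <= k)%N /\ ball p m.+1%:R^-1 (s k).
  have tail_m : (s @ \oo) [set x | exists k, (m <= k)%N /\ x = s k].
    exact: filterS (fun k mk => ex_intro _ k (conj mk erefl)) (nbhs_infty_ge m).
  have [_ [[k [mk ->]] near_k]] :=
    p_cluster _ _ tail_m (nbhsx_ballx p _ (natSinv_gt0 m)).
  by exists k.
have [phi phiP] := choice near_p.
exists p, phi; split => [m|]; first exact: (phiP m).1.
by apply: ball_natSinv_cvg => m; exact: (phiP m).2.
Qed.

Definition unit_cube a b := [set M : 'M[R]_(a, b) | forall i j, `|M i j| <= 1].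
Arguments unit_cube {a b}.

Lemma unit_cube_compact a b : compact (@unit_cube a b).
Proof.
pose V := [set v : 'rV[R]_(a * b) | forall i, `[-1, 1]%classic (v ord0 i)].
have V_compact : compact V.
  exact: (@rV_compact R (a * b) (fun=> `[-1, 1]%classic)
                      (fun _ => @segment_compact R (-1) 1)).
have -> : @unit_cube a b = vec_mx @` V.
  rewrite eqEsubset; split.
    move=> M M1; exists (mxvec M); last by rewrite mxvecK.
    by move=> k; case/mxvec_indexP: k => i j; rewrite mxvecE /= in_itv /= -ler_norml.
  move=> _ [v v1 <-] i j; rewrite /vec_mx mxE ler_norml.
  by have := v1 (mxvec_index i j); rewrite /= in_itv.
have vec_mx_cont : continuous (fun v : 'rV[R]_(a * b) => vec_mx v : 'M[R]_(a, b)).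
  move=> v.
  apply/(@cvg_ballP _ _ _ _ (@nbhs_filter _ v)) => e e0; near=> w.
  have [_ vw] : ball v e w by near: w; exact: nbhsx_ballx.
  by split => // i j; rewrite /vec_mx !mxE; exact: vw.
exact/(continuous_compact _ V_compact)/continuous_subspaceT.
Unshelve. all: end_near.
Qed.

Lemma col_mx0_unit_cube n (u : 'cV[R]_n) :
  norm2 u <= 1 -> unit_cube (col_mx u (0 : 'cV[R]_n)).
Proof.
move=> u_le1 i j; rewrite (ord1 j); case: (split_ordP i) => k ->.
  by rewrite col_mxEu (le_trans (normr_entry_le_norm2 _ _)).
by rewrite col_mxEd mxE normr0.
Qed.

Lemma row_tr_continuous m p (i : 'I_m) :
  continuous (fun M : 'M[R]_(m, p) => (row i M)^T).
Proof.
move=> M; apply/(@cvg_ballP _ _ _ _ (@nbhs_filter _ M)) => e e_gt0; near=> N.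
have [_ MN] : ball M e N by near: N; exact: nbhsx_ballx.
by split => // a b; rewrite !mxE; exact: MN.
Unshelve. all: end_near.
Qed.

Lemma norm2_mulmx_continuous a b :
  continuous (fun Mv : 'M[R]_(a, b) * 'cV[R]_b => norm2 (Mv.1 *m Mv.2)).
Proof.
have entry_cont i :
    continuous (fun Mv : 'M[R]_(a, b) * 'cV[R]_b => (Mv.1 *m Mv.2) i 0).
  have -> : (fun Mv : 'M[R]_(a, b) * 'cV[R]_b => (Mv.1 *m Mv.2) i 0) =
            (fun Mv => \sum_j Mv.1 i j * Mv.2 j 0).
    by apply/funext => Mv; rewrite mxE.
  apply: (continuous_big (op := +%R)) => [|j _ Mv]; first exact: add_continuous.
  exact: (continuousM (continuous_comp cvg_fst (@coord_continuous _ _ _ i j Mv.1))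
                      (continuous_comp cvg_snd (@coord_continuous _ _ _ j 0 Mv.2))).
move=> Mv; apply: (continuous_comp (f := fun Mv : 'M[R]_(a, b) * 'cV[R]_b =>
  dotv (Mv.1 *m Mv.2) (Mv.1 *m Mv.2))); last exact: sqrt_continuous.
apply: (continuous_big (op := +%R)) => [|i _ x]; first exact: add_continuous.
exact: (continuousM (entry_cont i x) (entry_cont i x)).
Qed.

Lemma lim_normal_coneZ p (C : set 'cV[R]_p) (z zs : 'cV[R]_p) (c : R) :
  0 <= c -> lim_normal_cone C z zs -> lim_normal_cone C z (c *: zs).
Proof.
move=> c_ge0 [t [ws [zss [t_gt0 [t_cvg [ws_cvg [zss_cvg [inC normal]]]]]]]].
exists t, ws, (fun k => c *: zss k); do 3 split => //.
split; first by apply: cvgZ => //; exact: cvg_cst.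
by split => // k w Tw; rewrite dotvZl mulr_ge0_le0 // normal.
Qed.

Lemma lim_normal_cone_approx p (C : set 'cV[R]_p) (z zs : 'cV[R]_p) (T e : R) :
  0 < T -> 0 < e -> lim_normal_cone C z zs ->
  exists d zr, [/\ C (z + T *: d), reg_normal_cone C (z + T *: d) zr,
                   ball 0 e d & ball zs e zr].
Proof.
move=> T_gt0 e_gt0 [s [ws [zss [s_gt0 [s_cvg [ws_cvg [zss_cvg [inC normal]]]]]]]].
have d_cvg : (fun j => (s j / T) *: ws j) @ \oo --> (0 : 'cV[R]_p).
  rewrite -(scaler0 _ 0); apply: cvgZ => //.
  by rewrite -(mul0r T^-1); apply: cvgM => //; exact: cvg_cst.
have /cvg_ballP/(_ e e_gt0) d_near := d_cvg.
have /cvg_ballP/(_ e e_gt0) zr_near := zss_cvg.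
have [j [d_j zr_j]] := filter_ex (filterI d_near zr_near).
have scale : T *: ((s j / T) *: ws j) = s j *: ws j.
  by rewrite scalerA mulrC divfK // gt_eqF.
by exists ((s j / T) *: ws j), (zss j); rewrite scale.
Qed.

Lemma dir_normal_cone_lim p (C : set 'cV[R]_p) (zb w zs : 'cV[R]_p)
    (T : nat -> R) (W Z : nat -> 'cV[R]_p) :
  (forall m, 0 < T m) -> T @ \oo --> 0 -> W @ \oo --> w -> Z @ \oo --> zs ->
  (forall m, lim_normal_cone C (zb + T m *: W m) (Z m)) ->
  dir_normal_cone C zb w zs.
Proof.
move=> T_gt0 T_cvg W_cvg Z_cvg normal.
have approx m := lim_normal_cone_approx (T_gt0 m) (natSinv_gt0 m) (normal m).
have [d /choice[zr zrP]] := choice approx.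
have d_cvg : d @ \oo --> (0 : 'cV[R]_p).
  by apply: ball_natSinv_cvg => m; have [] := zrP m.
exists T, (fun m => W m + d m), zr; do 2 split => //; split.
  by rewrite -[w]addr0; exact: cvgD.
split; first by apply: ball_natSinv_cvg_shift Z_cvg _ => m; have [] := zrP m.
by split => m; rewrite scalerDr addrA; have [] := zrP m.
Qed.

Lemma semismooth_star_dir_normal_orth n m (F : 'cV[R]_n -> set 'cV[R]_m)
    xb yb (w z : 'cV[R]_(n + m)) :
  semismooth_star F xb yb -> dir_normal_cone (gph F) (col_mx xb yb) w z ->
  dotv z w = 0.
Proof.
move=> ss normal.
have := ss (usubmx w) (dsubmx w) (- dsubmx z) (usubmx z).
rewrite /dir_coderiv /= opprK !vsubmxK => /(_ normal) orth.
rewrite -(vsubmxK z) -(vsubmxK w) dotv_col_mx orth -scaleN1r dotvZl.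
by rewrite mulN1r addNr.
Qed.

Definition normal_rows n (A B : 'M[R]_n) : 'M[R]_(n, n + n) :=
  (frob (row_mx A B))^-1 *: row_mx A (- B).

Lemma normal_rows_unit_cube n (A B : 'M[R]_n) : unit_cube (normal_rows A B).
Proof.
move=> i j; rewrite mxE normrM ger0_norm ?invr_ge0 ?sqrtr_ge0 //.
have [f0|f_neq0] := eqVneq (frob (row_mx A B)) 0; first by rewrite f0 invr0 mul0r.
have f_gt0 : 0 < frob (row_mx A B) by rewrite lt_neqAle eq_sym f_neq0 sqrtr_ge0.
rewrite ler_pdivrMl // mulr1; apply: le_trans (normr_entry_le_frob _ i j).
case: (split_ordP j) => k ->; first by rewrite !row_mxEl.
by rewrite !row_mxEr mxE normrN.
Qed.

Lemma row_normal_rows n (A B : 'M[R]_n) i :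
  (row i (normal_rows A B))^T =
  (frob (row_mx A B))^-1 *: col_mx (row i A)^T (- (row i B)^T).
Proof.
apply/matrixP => a b; rewrite (ord1 b) [RHS]mxE.
case: (split_ordP a) => j ->.
  by rewrite col_mxEu [LHS]mxE [LHS]mxE [LHS]mxE row_mxEl !mxE.
by rewrite col_mxEd [LHS]mxE [LHS]mxE [LHS]mxE row_mxEr !mxE mulrN.
Qed.

Lemma AF_normal_rows n (F : 'cV[R]_n -> set 'cV[R]_n) x y
    (AB : 'M[R]_n * 'M[R]_n) i :
  AF F x y AB ->
  lim_normal_cone (gph F) (col_mx x y) (row i (normal_rows AB.1 AB.2))^T.
Proof.
move=> /(_ i) normal; rewrite row_normal_rows.
by apply: lim_normal_coneZ normal; rewrite invr_ge0 sqrtr_ge0.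
Qed.

Lemma normal_rows_lower_bound n (A B : 'M[R]_n) (u : 'cV[R]_n) (kappa : R) :
  0 < kappa -> A \in unitmx -> norm2 u = 1 ->
  specnorm (invmx A) * frob (row_mx A B) <= kappa ->
  kappa^-1 <= norm2 (normal_rows A B *m col_mx u 0).
Proof.
move=> kappa_gt0 A_unit u1.
set f := frob (row_mx A B); set N := norm2 (A *m u) => bound.
have one_le : 1 <= specnorm (invmx A) * N.
  by rewrite -u1 -{1}(mulKmx A_unit u); exact: norm2_mulmx_le.
have f_gt0 : 0 < f.
  rewrite lt_neqAle sqrtr_ge0 andbT eq_sym; apply/eqP => /frob_eq0 AB0.
  have A0 : A = 0 by rewrite -(row_mxKl A B) AB0 linear0.
  by move: one_le; rewrite /N A0 mul0mx norm2_0 mulr0 ler10.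
have f_le : f <= kappa * N.
  have : f * 1 <= f * (specnorm (invmx A) * N) by rewrite ler_pM2l.
  rewrite mulr1 mulrA [f * _]mulrC => /le_trans; apply.
  by rewrite ler_wpM2r ?norm2_ge0.
rewrite /normal_rows -scalemxAl mul_row_col mulmx0 addr0 norm2Z -/f -/N.
rewrite ger0_norm ?invr_ge0 ?sqrtr_ge0 // -(ler_pM2l f_gt0) mulrA mulfV ?gt_eqF //.
by rewrite mul1r -(ler_pM2l kappa_gt0) mulrCA mulfV ?gt_eqF // mulr1.
Qed.

Lemma no_uniformly_regular_sequence n (F : 'cV[R]_n -> set 'cV[R]_n)
    (xb : 'cV[R]_n) (kappa : R)
    (xs : nat -> 'cV[R]_n) (ABs : nat -> 'M[R]_n * 'M[R]_n) :
  semismooth_star F xb 0 -> 0 < kappa ->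
  (forall k, 0 < norm2 (xs k - xb) < k.+1%:R^-1) ->
  (forall k, AregF F (xs k) 0 (ABs k)) ->
  (forall k,
     specnorm (invmx (ABs k).1) * frob (row_mx (ABs k).1 (ABs k).2) <= kappa) ->
  False.
Proof.
move=> ss kappa_gt0 xs_near regular bound.
pose t k := norm2 (xs k - xb).
pose u k := (t k)^-1 *: (xs k - xb).
pose C k := normal_rows (ABs k).1 (ABs k).2.
pose w k : 'cV[R]_(n + n) := col_mx (u k) 0.
have t_gt0 k : 0 < t k by have /andP[] := xs_near k.
have u1 k : norm2 (u k) = 1.
  by rewrite norm2Z ger0_norm ?invr_ge0 ?ltW // mulVf // gt_eqF.
have lower k : kappa^-1 <= norm2 (C k *m w k).
  by have [_ A_unit] := regular k; exact: normal_rows_lower_bound.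
have in_cubes k : (unit_cube `*` unit_cube) (C k, w k).
  by split; [exact: normal_rows_unit_cube | apply: col_mx0_unit_cube; rewrite u1].
have [[Cl wl] [phi [phi_ge Cw_cvg]]] := compact_subseq_cvg
  (compact_setX (@unit_cube_compact _ _) (@unit_cube_compact _ _)) in_cubes.
have t_cvg : (t \o phi) @ \oo --> 0.
  apply: ball_natSinv_cvg => m; rewrite /ball /= sub0r normrN gtr0_norm //.
  have /andP[_ lt_t] := xs_near (phi m); apply: lt_le_trans lt_t _.
  by rewrite lef_pV2 ?posrE // ler_nat ltnS phi_ge.
have base k : col_mx xb 0 + t k *: w k = col_mx (xs k) 0.
  rewrite /w scale_col_mx scaler0 add_col_mx addr0 /u scalerA mulfV ?gt_eqF //.
  by rewrite scale1r addrC subrK.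
have normal i : dir_normal_cone (gph F) (col_mx xb 0) wl (row i Cl)^T.
  apply: (dir_normal_cone_lim (T := t \o phi) (W := w \o phi)
                              (Z := fun m => (row i (C (phi m)))^T)) => //.
  - by move=> m; exact: t_gt0.
  - exact: (cvg_comp _ _ Cw_cvg cvg_snd).
  - exact: (cvg_comp _ _ (cvg_comp _ _ Cw_cvg cvg_fst)
                      (@row_tr_continuous _ _ i Cl)).
  - by move=> m; rewrite /= base; exact/AF_normal_rows/(regular _).1.
have Clwl : Cl *m wl = 0.
  apply/matrixP => i j; rewrite (ord1 j) [RHS]mxE -dotv_row_tr.
  exact: semismooth_star_dir_normal_orth ss (normal i).
have norm_cvg : (fun m => norm2 (C (phi m) *m w (phi m))) @ \oo --> 0.
  rewrite -(norm2_0 n) -Clwl.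
  exact: (cvg_comp _ _ Cw_cvg (@norm2_mulmx_continuous _ _ (Cl, wl))).
have kappaV_gt0 : 0 < kappa^-1 by rewrite invr_gt0.
have [m small] := filter_ex (cvgr_lt 0 norm_cvg _ kappaV_gt0).
by move: (lower (phi m)); rewrite leNgt small.
Qed.

End SemismoothIsolation.

Theorem corollary3p4 (R : realType) (n : nat) (F : 'cV[R]_n -> set 'cV[R]_n)
  (xb : 'cV[R]_n) (deltab kappa : R) :
  closed (gph F) ->
  F xb 0 ->
  semismooth_star F xb 0 ->
  0 < deltab -> 0 < kappa ->
  (forall x y : 'cV[R]_n, F x y ->
     norm2 (col_mx x y - col_mx xb 0) <= deltab ->
     exists AB : 'M[R]_n * 'M[R]_n,
       AregF F x y AB /\
       specnorm (invmx AB.1) * frob (row_mx AB.1 AB.2) <= kappa) ->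
  exists eps : R, 0 < eps /\
    forall x : 'cV[R]_n, norm2 (x - xb) < eps -> F x 0 -> x = xb.
Proof.
move=> _ _ ss deltab_gt0 kappa_gt0 regular_near.
apply: contrapT => not_isolated.
have near_sol k : exists x,
    [/\ 0 < norm2 (x - xb) < k.+1%:R^-1, norm2 (x - xb) <= deltab & F x 0].
  apply: contrapT => no_sol; apply: not_isolated.
  exists (Order.min deltab k.+1%:R^-1); split => [|x].
    by rewrite lt_min deltab_gt0 invr_gt0 ltr0Sn.
  rewrite lt_min => /andP[x_delta x_k] Fx; apply: contrapT => x_neq; apply: no_sol.
  exists x; split => //; last exact: ltW.
  by rewrite x_k andbT norm2_gt0 subr_eq0; apply/eqP.
have [xs /all_and3[xs_near xs_delta xs_sol]] := choice near_sol.
have dist k : norm2 (col_mx (xs k) 0 - col_mx xb (0 : 'cV[R]_n)) <= deltab.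
  by rewrite opp_col_mx add_col_mx subrr norm2_col_mx0; exact: xs_delta.
have [ABs /all_and2[ABs_reg ABs_bound]] :=
  choice (fun k => regular_near (xs k) 0 (xs_sol k) (dist k)).
exact: (no_uniformly_regular_sequence ss kappa_gt0 xs_near ABs_reg ABs_bound).
Qed.
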